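(* Let $\{S_{\mathbf a^{*[k]}},\,k\ge0\}$ be a local, bounded (i.e. $\sup_k\|S_{\mathbf a^{*[k]}}\|<\infty$) subdivision scheme that reproduces constants and satisfies Condition A. Then every local subdivision scheme $\{S_{\mathbf a^{[k]}},\,k\ge0\}$ that reproduces constants and is asymptotically similar to $\{S_{\mathbf a^{*[k]}},\,k\ge0\}$ (i.e. $\lim_{k\to\infty}\|\mathbf a^{[k]}-\mathbf a^{*[k]}\|=0$) also satisfies Condition A.
   Context: A subdivision scheme $\{S_{\mathbf a^{[k]}},\,k\ge0\}$ is given by finitely supported masks $\mathbf a^{[k]}=\{a^{[k]}_i\}_{i\in\mathbb Z}$ and operators $(S_{\mathbf a^{[k]}}\mathbf f)_i=\sum_{j\in\mathbb Z}a^{[k]}_{i-2j}f_j$ on $\mathbf f\in\mathbb R^{\mathbb Z}$. Local means: there is a positive integer $N$ with all masks supported in $[-N,N]$. Norms are sup-norms: $\|\mathbf a\|=\sup_i|a_i|$, and $\|S_{\mathbf a}\|=\max(\sum_i|a_{2i}|,\sum_i|a_{2i+1}|)$ (operator sup-norm). The scheme reproduces constants if $\sum_ia^{[k]}_{2i}=\sum_ia^{[k]}_{2i+1}=1$ for all $k$; then its difference scheme $\{S_{\mathbf q^{[k]}}\}$ has masks $q^{[k]}_i=\sum_{j\le i}(-1)^{i-j}a^{[k]}_j$. A scheme reproducing constants satisfies Condition A if there exist integers $K\ge0$, $n>0$ with $\sup_{k\ge K}\|S_{\mathbf q^{[k+n-1]}}\cdots S_{\mathbf q^{[k+1]}}S_{\mathbf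 q^{[k]}}\|<1$. *)

From Stdlib Require Import Reals ZArith Lra Lia.
Open Scope R_scope.

(* A (non-stationary) scheme: level k -> mask a^[k] : Z -> R. *)
Definition scheme := nat -> Z -> R.

Fixpoint zsum_len (lo : Z) (len : nat) (f : Z -> R) : R :=
  match len with
  | O => 0
  | S m => f lo + zsum_len (lo + 1)%Z m f
  end.

(* sum_{t = lo}^{hi} f t  (empty if hi < lo) *)
Definition zsum (lo hi : Z) (f : Z -> R) : R :=
  zsum_len lo (Z.to_nat (hi - lo + 1)) f.

Definition local_with (N : nat) (a : scheme) : Prop :=
  forall k i, (Z.abs i > Z.of_nat N)%Z -> a k i = 0.

Definition local (a : scheme) : Prop := exists N : nat, (0 < N)%nat /\ local_with N a.

Definition even_abs_sum (N : nat) (m : Z -> R) : R :=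
  zsum (- Z.of_nat N) (Z.of_nat N) (fun l => if Z.even l then Rabs (m l) else 0).
Definition odd_abs_sum (N : nat) (m : Z -> R) : R :=
  zsum (- Z.of_nat N) (Z.of_nat N) (fun l => if Z.even l then 0 else Rabs (m l)).

(* ||S_a|| = max (sum_i |a_{2i}|, sum_i |a_{2i+1}|) *)
Definition mask_opnorm (N : nat) (m : Z -> R) : R :=
  Rmax (even_abs_sum N m) (odd_abs_sum N m).

Definition reproduces_constants (N : nat) (a : scheme) : Prop :=
  forall k,
    zsum (- Z.of_nat N) (Z.of_nat N) (fun l => if Z.even l then a k l else 0) = 1 /\
    zsum (- Z.of_nat N) (Z.of_nat N) (fun l => if Z.even l then 0 else a k l) = 1.

Definition diff_mask (N : nat) (m : Z -> R) : Z -> R :=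
  fun i => zsum (- Z.of_nat N) i
                (fun j => (if Z.even (i - j) then 1 else -1) * m j).

(* (S_m f)_i = sum_j m_{i-2j} f_j, for m supported in [-N,N]; the range of j
   below contains every j with |i - 2j| <= N, so this is the full series. *)
Definition sub_op (N : nat) (m : Z -> R) (f : Z -> R) : Z -> R :=
  fun i => zsum (Z.div (i - Z.of_nat N) 2 - 1) (Z.div (i + Z.of_nat N) 2 + 1)
                (fun j => m (i - 2 * j)%Z * f j).

Fixpoint diff_comp (N : nat) (a : scheme) (k n : nat) (f : Z -> R) : Z -> R :=
  match n with
  | O => f
  | S n' => sub_op N (diff_mask N (a (k + n')%nat)) (diff_comp N a k n' f)
  end.

(* Condition A: exist K >= 0, n > 0 with
   sup_{k >= K} || S_{q^[k+n-1]} ... S_{q^[k]} || < 1  (operator sup-norm on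
   l^oo(Z)), written out: some c < 1 bounds |(T_k f)_i| for all k >= K, all
   f with ||f||_oo <= 1 and all i. *)
Definition conditionA (N : nat) (a : scheme) : Prop :=
  exists (K n : nat), (0 < n)%nat /\
    exists c : R, c < 1 /\
      forall k : nat, (K <= k)%nat ->
        forall f : Z -> R, (forall j, Rabs (f j) <= 1) ->
          forall i, Rabs (diff_comp N a k n f i) <= c.

Definition asymptotically_similar (a astar : scheme) : Prop :=
  forall eps : R, 0 < eps -> exists K : nat, forall k : nat, (K <= k)%nat ->
    forall i, Rabs (a k i - astar k i) <= eps.

(* Widen every mask to the common support [-M, M], M = max N N*.  Since both
   schemes reproduce constants, the even and odd sums of each mask agree, so the
   difference masks are again supported in [-M, M] and are bounded by, resp.
   Lipschitz in, the sup-norm of the masks.  A telescoping estimate then shows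
   that the n-fold products of the two difference schemes differ by O(eps) on
   the unit ball of l^oo once ||a^[k] - a*^[k]|| <= eps, so the contraction
   factor c < 1 of the starred scheme survives as (1 + c) / 2. *)
From Stdlib Require Import Reals ZArith Lra Lia.
Open Scope R_scope.

Lemma zsum_len_ext lo n f g :
  (forall t, (lo <= t < lo + Z.of_nat n)%Z -> f t = g t) ->
  zsum_len lo n f = zsum_len lo n g.
Proof.
  revert lo; induction n as [|n IH]; intros lo H; simpl; auto.
  rewrite H by lia. f_equal. apply IH. intros t Ht; apply H; lia.
Qed.

Lemma zsum_len_app lo n1 n2 f :
  zsum_len lo (n1 + n2) f = zsum_len lo n1 f + zsum_len (lo + Z.of_nat n1) n2 f.
Proof.
  revert lo; induction n1 as [|n1 IH]; intros lo; simpl.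
  - replace (lo + 0)%Z with lo by lia. lra.
  - rewrite IH. replace (lo + 1 + Z.of_nat n1)%Z with (lo + Z.pos (Pos.of_succ_nat n1))%Z by lia.
    lra.
Qed.

Lemma zsum_len_eq0 lo n f :
  (forall t, (lo <= t < lo + Z.of_nat n)%Z -> f t = 0) -> zsum_len lo n f = 0.
Proof.
  intros H; rewrite (zsum_len_ext lo n f (fun _ => 0)) by auto.
  clear H; revert lo; induction n as [|n IH]; intros lo; simpl; [lra|].
  rewrite IH; lra.
Qed.

Lemma zsum_len_abs_le lo n f B :
  (forall t, Rabs (f t) <= B) -> Rabs (zsum_len lo n f) <= INR n * B.
Proof.
  intros H; revert lo; induction n as [|n IH]; intros lo; simpl.
  - rewrite Rabs_R0; lra.
  - eapply Rle_trans; [apply Rabs_triang|].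
    specialize (IH (lo + 1)%Z); specialize (H lo). destruct n; simpl in *; lra.
Qed.

Lemma zsum_len_term lo n f t :
  (forall s, 0 <= f s) -> (lo <= t < lo + Z.of_nat n)%Z -> f t <= zsum_len lo n f.
Proof.
  intros H; revert lo; induction n as [|n IH]; intros lo Ht; simpl; [lia|].
  destruct (Z.eq_dec t lo) as [->|Hne].
  - enough (0 <= zsum_len (lo + 1) n f) by lra.
    clear IH Ht; revert lo; induction n as [|n IH]; intros lo; simpl; [lra|].
    specialize (H (lo + 1)%Z); specialize (IH (lo + 1)%Z); lra.
  - specialize (IH (lo + 1)%Z ltac:(lia)); specialize (H lo); lra.
Qed.

Lemma zsum_ext lo hi f g :
  (forall t, (lo <= t <= hi)%Z -> f t = g t) -> zsum lo hi f = zsum lo hi g.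
Proof. intros H; apply zsum_len_ext; intros t Ht; apply H; lia. Qed.

Lemma zsum_sub lo hi f g :
  zsum lo hi (fun t => f t - g t) = zsum lo hi f - zsum lo hi g.
Proof.
  unfold zsum; generalize (Z.to_nat (hi - lo + 1)) as n; intros n.
  revert lo; induction n as [|n IH]; intros lo; simpl; [lra|]. rewrite IH; lra.
Qed.

Lemma zsum_add lo hi f g :
  zsum lo hi (fun t => f t + g t) = zsum lo hi f + zsum lo hi g.
Proof.
  unfold zsum; generalize (Z.to_nat (hi - lo + 1)) as n; intros n.
  revert lo; induction n as [|n IH]; intros lo; simpl; [lra|]. rewrite IH; lra.
Qed.

Lemma zsum_scal lo hi c f :
  zsum lo hi (fun t => c * f t) = c * zsum lo hi f.
Proof.
  unfold zsum; generalize (Z.to_nat (hi - lo + 1)) as n; intros n.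
  revert lo; induction n as [|n IH]; intros lo; simpl; [lra|]. rewrite IH; lra.
Qed.

Lemma zsum_narrow lo hi a b f : (lo <= a)%Z -> (b <= hi)%Z ->
  (forall t, (lo <= t <= hi)%Z -> ~ (a <= t <= b)%Z -> f t = 0) ->
  zsum lo hi f = zsum a b f.
Proof.
  intros Hlo Hhi H; unfold zsum.
  destruct (Z_le_gt_dec a b).
  - replace (Z.to_nat (hi - lo + 1))
      with ((Z.to_nat (a - lo) + Z.to_nat (b - a + 1)) + Z.to_nat (hi - b))%nat by lia.
    rewrite !zsum_len_app, (zsum_len_eq0 lo), (zsum_len_eq0 (_ + _)%Z (Z.to_nat (hi - b))).
    + replace (lo + Z.of_nat (Z.to_nat (a - lo)))%Z with a by lia. lra.
    + intros t Ht; apply H; lia.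
    + intros t Ht; apply H; lia.
  - replace (Z.to_nat (b - a + 1)) with O by lia.
    apply zsum_len_eq0; intros t Ht; apply H; lia.
Qed.

Lemma zsum_abs_le lo hi f B :
  (forall t, Rabs (f t) <= B) -> Rabs (zsum lo hi f) <= INR (Z.to_nat (hi - lo + 1)) * B.
Proof. apply zsum_len_abs_le. Qed.

Lemma zsum_term lo hi f t :
  (forall s, 0 <= f s) -> (lo <= t <= hi)%Z -> f t <= zsum lo hi f.
Proof. intros H Ht; apply zsum_len_term; auto; lia. Qed.

Lemma Rabs_le_nonneg (f : Z -> R) B : (forall t, Rabs (f t) <= B) -> 0 <= B.
Proof. intros H; pose proof (Rabs_pos (f 0%Z)); specialize (H 0%Z); lra. Qed.

Lemma INR_mul_le n m B : (n <= m)%nat -> 0 <= B -> INR n * B <= INR m * B.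
Proof. intros; apply Rmult_le_compat_r; auto; apply le_INR; auto. Qed.

Definition supported_in (N : nat) (m : Z -> R) : Prop :=
  forall l, (Z.abs l > Z.of_nat N)%Z -> m l = 0.

Definition even_sum (N : nat) (m : Z -> R) : R :=
  zsum (- Z.of_nat N) (Z.of_nat N) (fun l => if Z.even l then m l else 0).
Definition odd_sum (N : nat) (m : Z -> R) : R :=
  zsum (- Z.of_nat N) (Z.of_nat N) (fun l => if Z.even l then 0 else m l).

Lemma reproduces_constants_balanced N a k :
  reproduces_constants N a -> even_sum N (a k) = odd_sum N (a k).
Proof. intros H; destruct (H k) as [He Ho]; unfold even_sum, odd_sum; congruence. Qed.

Lemma Rabs_le_mask_opnorm N m l : supported_in N m -> Rabs (m l) <= mask_opnorm N m.
Proof.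
  intros Hm; unfold mask_opnorm.
  pose proof (Rmax_l (even_abs_sum N m) (odd_abs_sum N m)).
  pose proof (Rmax_r (even_abs_sum N m) (odd_abs_sum N m)).
  assert (He : forall s, 0 <= (if Z.even s then Rabs (m s) else 0))
    by (intros s; destruct (Z.even s); [apply Rabs_pos | lra]).
  assert (Ho : forall s, 0 <= (if Z.even s then 0 else Rabs (m s)))
    by (intros s; destruct (Z.even s); [lra | apply Rabs_pos]).
  destruct (Z_le_gt_dec (Z.abs l) (Z.of_nat N)).
  - pose proof (zsum_term (- Z.of_nat N) (Z.of_nat N) _ l He ltac:(lia)).
    pose proof (zsum_term (- Z.of_nat N) (Z.of_nat N) _ l Ho ltac:(lia)).
    unfold even_abs_sum, odd_abs_sum in *. destruct (Z.even l); lra.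
  - rewrite Hm, Rabs_R0 by lia.
    pose proof (zsum_term (- Z.of_nat N) (Z.of_nat N) _ 0%Z He ltac:(lia)) as Hterm0.
    pose proof (Rabs_pos (m 0%Z)); unfold even_abs_sum in *; cbn in Hterm0; lra.
Qed.

Lemma sub_op_ext M q q' g g' i :
  (forall l, q l = q' l) -> (forall j, g j = g' j) -> sub_op M q g i = sub_op M q' g' i.
Proof. intros Hq Hg; apply zsum_ext; intros j _; rewrite Hq, Hg; reflexivity. Qed.

Lemma sub_op_widen N M q g i :
  (N <= M)%nat -> supported_in N q -> sub_op N q g i = sub_op M q g i.
Proof.
  intros HNM Hq; unfold sub_op; symmetry.
  assert (Z.of_nat N <= Z.of_nat M)%Z by lia.
  pose proof (Z.div_mod (i - Z.of_nat N) 2 ltac:(lia)).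
  pose proof (Z.mod_pos_bound (i - Z.of_nat N) 2 ltac:(lia)).
  pose proof (Z.div_mod (i + Z.of_nat N) 2 ltac:(lia)).
  pose proof (Z.mod_pos_bound (i + Z.of_nat N) 2 ltac:(lia)).
  apply zsum_narrow.
  - apply Z.sub_le_mono_r, Z.div_le_mono; lia.
  - apply Z.add_le_mono_r, Z.div_le_mono; lia.
  - intros t _ Ht; rewrite Hq by lia; lra.
Qed.

Lemma sub_op_window_le M i :
  (Z.to_nat ((i + Z.of_nat M) / 2 + 1 - ((i - Z.of_nat M) / 2 - 1) + 1) <= M + 4)%nat.
Proof.
  pose proof (Z.div_mod (i - Z.of_nat M) 2 ltac:(lia)).
  pose proof (Z.mod_pos_bound (i - Z.of_nat M) 2 ltac:(lia)).
  pose proof (Z.div_mod (i + Z.of_nat M) 2 ltac:(lia)).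
  pose proof (Z.mod_pos_bound (i + Z.of_nat M) 2 ltac:(lia)).
  lia.
Qed.

Lemma sub_op_abs_le M q g i Q G :
  (forall l, Rabs (q l) <= Q) -> (forall j, Rabs (g j) <= G) ->
  Rabs (sub_op M q g i) <= (INR M + 4) * Q * G.
Proof.
  intros Hq Hg.
  pose proof (Rabs_le_nonneg q Q Hq); pose proof (Rabs_le_nonneg g G Hg).
  eapply Rle_trans.
  - apply zsum_abs_le with (B := Q * G); intros j.
    rewrite Rabs_mult; apply Rmult_le_compat; auto using Rabs_pos.
  - replace (INR M + 4) with (INR (M + 4)) by (rewrite plus_INR; simpl; lra).
    rewrite Rmult_assoc; apply INR_mul_le; [apply sub_op_window_le | nra].
Qed.

Lemma sub_op_sub M q q' g g' i :
  sub_op M q g i - sub_op M q' g' i =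
  sub_op M q (fun j => g j - g' j) i + sub_op M (fun l => q l - q' l) g' i.
Proof.
  unfold sub_op; rewrite <- zsum_sub, <- zsum_add.
  apply zsum_ext; intros j _; ring.
Qed.

Lemma diff_mask_left N m l : (l < - Z.of_nat N)%Z -> diff_mask N m l = 0.
Proof.
  intros H; unfold diff_mask, zsum.
  replace (Z.to_nat (l - - Z.of_nat N + 1)) with O by lia. reflexivity.
Qed.

(* For l >= N the alternating sum runs over the whole support and equals
   (-1)^l (even_sum - odd_sum). *)
Lemma diff_mask_right N m l : supported_in N m -> even_sum N m = odd_sum N m ->
  (Z.of_nat N <= l)%Z -> diff_mask N m l = 0.
Proof.
  intros Hm Hbal Hl; unfold diff_mask.
  rewrite (zsum_narrow _ _ (- Z.of_nat N) (Z.of_nat N)) by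
    (lia || (intros t _ Ht; rewrite Hm by lia; lra)).
  rewrite (zsum_ext _ _ _ (fun t => (if Z.even l then 1 else -1) *
           ((if Z.even t then m t else 0) - (if Z.even t then 0 else m t)))).
  - rewrite zsum_scal, zsum_sub; fold (even_sum N m) (odd_sum N m).
    rewrite Hbal; lra.
  - intros t _; rewrite Z.even_sub; destruct (Z.even l), (Z.even t); simpl; ring.
Qed.

Lemma diff_mask_supported N m : supported_in N m -> even_sum N m = odd_sum N m ->
  supported_in N (diff_mask N m).
Proof.
  intros Hm Hbal l Hl; destruct (Z_lt_ge_dec l 0).
  - apply diff_mask_left; lia.
  - apply diff_mask_right; auto; lia.
Qed.

Lemma diff_mask_widen N M m l : (N <= M)%nat -> supported_in N m ->
  diff_mask N m l = diff_mask M m l.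
Proof.
  intros HNM Hm; destruct (Z_lt_ge_dec l (- Z.of_nat N)).
  - rewrite (diff_mask_left N m l) by lia.
    unfold diff_mask, zsum; symmetry; apply zsum_len_eq0.
    intros t Ht; rewrite Hm by lia; lra.
  - unfold diff_mask; symmetry; apply zsum_narrow; try lia.
    intros t Ht Hout; rewrite Hm by lia; lra.
Qed.

Lemma diff_mask_sub M m m' l :
  diff_mask M m l - diff_mask M m' l = diff_mask M (fun j => m j - m' j) l.
Proof.
  unfold diff_mask; rewrite <- zsum_sub; apply zsum_ext; intros t _; ring.
Qed.

Lemma diff_mask_abs_le M m A l : (forall j, Rabs (m j) <= A) -> (l < Z.of_nat M)%Z ->
  Rabs (diff_mask M m l) <= 2 * INR M * A.
Proof.
  intros HA Hl; pose proof (Rabs_le_nonneg m A HA).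
  eapply Rle_trans.
  - apply zsum_abs_le with (B := A); intros t.
    rewrite Rabs_mult; destruct (Z.even (l - t)).
    + rewrite Rabs_R1, Rmult_1_l; apply HA.
    + rewrite Rabs_left by lra; specialize (HA t); lra.
  - replace (2 * INR M) with (INR (2 * M)) by (rewrite mult_INR; simpl; lra).
    apply INR_mul_le; auto; lia.
Qed.

Lemma diff_mask_sup_le N M m A l : (N <= M)%nat -> supported_in N m ->
  even_sum N m = odd_sum N m -> (forall j, Rabs (m j) <= A) ->
  Rabs (diff_mask M m l) <= 2 * INR M * A.
Proof.
  intros HNM Hm Hbal HA; destruct (Z_lt_ge_dec l (Z.of_nat M)).
  - apply diff_mask_abs_le; auto.
  - rewrite <- (diff_mask_widen N M m l), diff_mask_right, Rabs_R0 by (auto; lia).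
    pose proof (Rabs_le_nonneg m A HA); pose proof (pos_INR M); nra.
Qed.

Lemma diff_mask_dist_le N N' M m m' e l : (N <= M)%nat -> (N' <= M)%nat ->
  supported_in N m -> even_sum N m = odd_sum N m ->
  supported_in N' m' -> even_sum N' m' = odd_sum N' m' ->
  (forall j, Rabs (m j - m' j) <= e) ->
  Rabs (diff_mask M m l - diff_mask M m' l) <= 2 * INR M * e.
Proof.
  intros HNM HNM' Hm Hbal Hm' Hbal' He; destruct (Z_lt_ge_dec l (Z.of_nat M)).
  - rewrite diff_mask_sub; apply diff_mask_abs_le; auto.
  - rewrite <- (diff_mask_widen N M m l), <- (diff_mask_widen N' M m' l) by auto.
    rewrite !diff_mask_right, Rminus_0_r, Rabs_R0 by (auto; lia).
    pose proof (Rabs_le_nonneg _ e He); pose proof (pos_INR M); nra.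
Qed.

Fixpoint sub_comp (M : nat) (q : nat -> Z -> R) (n : nat) (f : Z -> R) : Z -> R :=
  match n with
  | O => f
  | S n' => sub_op M (q n') (sub_comp M q n' f)
  end.

Lemma diff_comp_sub_comp N M a k n f i : (N <= M)%nat ->
  local_with N a -> reproduces_constants N a ->
  diff_comp N a k n f i = sub_comp M (fun m => diff_mask M (a (k + m)%nat)) n f i.
Proof.
  intros HNM Hloc Hrep; revert i; induction n as [|n IH]; intros i; simpl; auto.
  assert (Hq : supported_in N (diff_mask N (a (k + n)%nat))).
  { apply diff_mask_supported; [exact (Hloc _) | apply reproduces_constants_balanced; auto]. }
  rewrite (sub_op_widen N M) by auto.
  apply sub_op_ext; auto.
  intros l; apply diff_mask_widen; auto; exact (Hloc _).
Qed.

Lemma sub_comp_abs_le M q Q f :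
  (forall m l, Rabs (q m l) <= Q) -> (forall j, Rabs (f j) <= 1) ->
  forall n i, Rabs (sub_comp M q n f i) <= ((INR M + 4) * Q) ^ n.
Proof.
  intros Hq Hf n; induction n as [|n IH]; intros i; simpl; auto.
  apply sub_op_abs_le; auto.
Qed.

Section SubCompPerturbation.

Variables (M : nat) (q q' : nat -> Z -> R) (Q d : R) (f : Z -> R).
Hypothesis Hq : forall m l, Rabs (q m l) <= Q.
Hypothesis Hq' : forall m l, Rabs (q' m l) <= Q.
Hypothesis Hd : forall m l, Rabs (q m l - q' m l) <= d.
Hypothesis Hf : forall j, Rabs (f j) <= 1.

(* Telescoping: T_{n+1} - T'_{n+1} = S_q (T_n - T'_n) + S_{q - q'} T'_n. *)
Lemma sub_comp_dist_le n i :
  Rabs (sub_comp M q n f i - sub_comp M q' n f i) <=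
  INR n * ((INR M + 4) * d) * (1 + (INR M + 4) * Q) ^ n.
Proof.
  set (rho := (INR M + 4) * Q); set (sigma := (INR M + 4) * d).
  assert (Hrho : 0 <= rho) by
    (pose proof (pos_INR M); pose proof (Rabs_le_nonneg _ Q (Hq 0%nat)); unfold rho; nra).
  assert (Hsigma : 0 <= sigma) by
    (pose proof (pos_INR M); pose proof (Rabs_le_nonneg _ d (Hd 0%nat)); unfold sigma; nra).
  revert i; induction n as [|n IH]; intros i.
  - simpl; rewrite Rminus_diag, Rabs_R0; lra.
  - cbn [sub_comp pow]; rewrite sub_op_sub.
    pose proof (sub_op_abs_le M (q n) _ i Q _ (Hq n) IH) as H1.
    pose proof (sub_op_abs_le M _ (sub_comp M q' n f) i d _ (Hd n)
                  (sub_comp_abs_le M q' Q f Hq' Hf n)) as H2.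
    fold rho sigma in H1, H2.
    set (P := (1 + rho) ^ n) in *.
    assert (HP : 0 <= P) by (apply pow_le; lra).
    assert (sigma * rho ^ n <= sigma * P) by (apply Rmult_le_compat_l, pow_incr; lra).
    assert (0 <= INR n * (sigma * P)) by (apply Rmult_le_pos; [apply pos_INR | nra]).
    assert (0 <= INR n * (sigma * rho * P)).
    { apply Rmult_le_pos; [apply pos_INR | apply Rmult_le_pos; nra]. }
    assert (0 <= sigma * rho * P) by (apply Rmult_le_pos; nra).
    rewrite S_INR; eapply Rle_trans; [apply Rabs_triang|]. nra.
Qed.

End SubCompPerturbation.

Lemma diff_comp_lipschitz N Nstar a astar n C :
  local_with N a -> reproduces_constants N a ->
  local_with Nstar astar -> reproduces_constants Nstar astar ->
  exists E, forall k eps,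
    (forall m l, Rabs (a (k + m)%nat l) <= C) ->
    (forall m l, Rabs (astar (k + m)%nat l) <= C) ->
    (forall m l, Rabs (a (k + m)%nat l - astar (k + m)%nat l) <= eps) ->
    forall f, (forall j, Rabs (f j) <= 1) ->
    forall i, Rabs (diff_comp N a k n f i - diff_comp Nstar astar k n f i) <= eps * E.
Proof.
  intros Hloc Hrep Hlocs Hreps.
  set (M := Nat.max N Nstar); set (Q := 2 * INR M * C).
  exists (INR n * ((INR M + 4) * (2 * INR M)) * (1 + (INR M + 4) * Q) ^ n).
  intros k eps Ha Hastar Hclose f Hf i.
  rewrite (diff_comp_sub_comp N M), (diff_comp_sub_comp Nstar M) by (auto; lia).
  set (q := fun m => diff_mask M (a (k + m)%nat)).
  set (qstar := fun m => diff_mask M (astar (k + m)%nat)).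
  assert (Hq : forall m l, Rabs (q m l) <= Q).
  { intros m l; apply (diff_mask_sup_le N); try lia; auto.
    - exact (Hloc _).
    - apply reproduces_constants_balanced; auto. }
  assert (Hqstar : forall m l, Rabs (qstar m l) <= Q).
  { intros m l; apply (diff_mask_sup_le Nstar); try lia; auto.
    - exact (Hlocs _).
    - apply reproduces_constants_balanced; auto. }
  assert (Hqdist : forall m l, Rabs (q m l - qstar m l) <= 2 * INR M * eps).
  { intros m l; apply (diff_mask_dist_le N Nstar); try lia; auto;
      try (exact (Hloc _)); try (exact (Hlocs _));
      apply reproduces_constants_balanced; auto. }
  eapply Rle_trans; [exact (sub_comp_dist_le M q qstar Q _ f Hq Hqstar Hqdist Hf n i)|].
  right; ring.
Qed.

Lemma asymptotically_similar_bounded a astar C :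
  asymptotically_similar a astar -> (forall k l, Rabs (astar k l) <= C) ->
  exists K, forall k, (K <= k)%nat -> forall l, Rabs (a k l) <= C + 1.
Proof.
  intros Hsim HC; destruct (Hsim 1 Rlt_0_1) as [K HK]; exists K; intros k Hk l.
  pose proof (HK k Hk l); pose proof (HC k l).
  pose proof (Rabs_triang_inv (a k l) (astar k l)); lra.
Qed.

Lemma exists_pos_mul_le E r : 0 < r -> exists eps, 0 < eps /\ eps * E <= r.
Proof.
  intros Hr; pose proof (Rabs_pos E); exists (r / (Rabs E + 1)); split.
  - apply Rdiv_lt_0_compat; lra.
  - apply Rle_trans with (r / (Rabs E + 1) * Rabs E).
    + apply Rmult_le_compat_l; [apply Rlt_le, Rdiv_lt_0_compat; lra | apply Rle_abs].
    + apply (Rmult_le_reg_r (Rabs E + 1)); [lra|]. field_simplify; nra.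
Qed.

Theorem proposition9 :
  forall (Nstar : nat) (astar : scheme),
    (0 < Nstar)%nat -> local_with Nstar astar ->
    (exists C : R, forall k, mask_opnorm Nstar (astar k) <= C) ->
    reproduces_constants Nstar astar ->
    conditionA Nstar astar ->
  forall (N : nat) (a : scheme),
    (0 < N)%nat -> local_with N a ->
    reproduces_constants N a ->
    asymptotically_similar a astar ->
    conditionA N a.
Proof.
  intros Nstar astar _ Hlocs [C HC] Hreps [K [n [Hn [c [Hc HA]]]]]
         N a _ Hloc Hrep Hsim.
  assert (Hstar : forall k l, Rabs (astar k l) <= C).
  { intros k l; eapply Rle_trans; [apply Rabs_le_mask_opnorm; exact (Hlocs k) | apply HC]. }
  destruct (asymptotically_similar_bounded a astar C Hsim Hstar) as [K1 Ha].
  destruct (diff_comp_lipschitz N Nstar a astar n (C + 1)) as [E HE]; auto.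
  destruct (exists_pos_mul_le E ((1 - c) / 2)) as [eps [Heps HepsE]]; [lra|].
  destruct (Hsim eps Heps) as [K2 Hclose].
  exists (Nat.max K (Nat.max K1 K2)), n; split; auto.
  exists ((1 + c) / 2); split; [lra|]; intros k Hk f Hf i.
  specialize (HA k ltac:(lia) f Hf i).
  assert (Hstar1 : forall m l, Rabs (astar (k + m)%nat l) <= C + 1)
    by (intros m l; specialize (Hstar (k + m)%nat l); lra).
  specialize (HE k eps (fun m => Ha (k + m)%nat ltac:(lia)) Hstar1
                (fun m => Hclose (k + m)%nat ltac:(lia)) f Hf i).
  pose proof (Rabs_triang_inv (diff_comp N a k n f i) (diff_comp Nstar astar k n f i)).
  lra.
Qed.
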